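(* Every finite nonempty set of integers is the signed degree set of some connected signed bipartite graph.
   Context: A signed bipartite graph $G(U,V)$ is a finite simple bipartite graph with bipartition $U, V$ (both nonempty, every edge joining a vertex of $U$ to a vertex of $V$) in which each edge is assigned a sign, positive or negative. The signed degree of a vertex $x$ is $\mathrm{sdeg}(x) = d^+(x) - d^-(x)$, where $d^+(x)$ (resp. $d^-(x)$) is the number of positive (resp. negative) edges incident with $x$. The signed degree set of $G(U,V)$ is the set of distinct signed degrees of its vertices. $G(U,V)$ is called connected if each vertex of $U$ is connected (by a path) to every vertex of $V$. *)

From mathcomp Require Import all_boot all_order all_algebra.
Set Implicit Arguments. Unset Strict Implicit. Unset Printing Implicit Defensive.
Import GRing.Theory Num.Theory.

(* A signed bipartite graph with parts U and V (finite types) is given by a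
   signing  s : U -> V -> option bool :
     s u v = None        : no edge between u and v,
     s u v = Some true   : a positive edge uv,
     s u v = Some false  : a negative edge uv.
   This gives exactly a finite simple bipartite graph (at most one edge per
   pair, edges only between U and V) with a sign on each edge. *)
Definition signing (U V : finType) := U -> V -> option bool.

Section SignedBipartite.
Variables (U V : finType) (s : signing U V).

Definition sdeg (x : U + V) : int :=
  match x with
  | inl u => (#|[set v | s u v == Some true]|%:Z - #|[set v | s u v == Some false]|%:Z)%R
  | inr v => (#|[set u | s u v == Some true]|%:Z - #|[set u | s u v == Some false]|%:Z)%R
  end.

Definition sadj : rel (U + V) := fun x y =>
  match x, y with
  | inl u, inr v => s u v != None
  | inr v, inl u => s u v != None
  | _, _ => false
  end.

Definition sconnected : Prop := forall u v, connect sadj (inl u) (inr v).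

Definition in_sdeg_set (z : int) : Prop := exists x : U + V, sdeg x = z.
End SignedBipartite.

From mathcomp Require Import all_boot all_order all_algebra zify.
Set Implicit Arguments. Unset Strict Implicit. Unset Printing Implicit Defensive.
Import GRing.Theory Num.Theory.

(* Take a list a_0, ..., a_(k-1) of the elements of S with k >= 3 (three copies
   of S).  Both parts consist of k blocks Z/n with n even and n >= |a_i|.  The
   vertices (i, x) of U and (j, y) of V are joined with sign (-1)^(y - x) when
   i <> j, and with sign sgn a_i iff y - x < |a_i| when i = j.  Off-diagonal
   block pairs are complete with alternating signs, which cancel since n is
   even, while the diagonal block gives every vertex of block i exactly |a_i|
   edges of sign sgn a_i: all vertices of block i have signed degree a_i.
   Distinct blocks being completely joined, three blocks make the graph
   connected. *)

Local Open Scope ring_scope.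

Definition sign_weight (o : option bool) : int :=
  match o with Some true => 1 | Some false => -1 | None => 0 end.

Lemma card_sign_diff (T : finType) (h : T -> option bool) :
  #|[set t | h t == Some true]|%:Z - #|[set t | h t == Some false]|%:Z
    = \sum_t sign_weight (h t).
Proof.
have cardE (P : pred T) : #|[set t | P t]|%:Z = \sum_t (P t)%:R.
  rewrite -sum1_card -natz natr_sum big_mkcond /=.
  by apply: eq_bigr => t _; rewrite inE; case: (P t).
by rewrite !cardE -sumrB; apply: eq_bigr => t _; case: (h t) => [[]|].
Qed.

Section SignedDegreeSum.
Variables (U V : finType) (s : signing U V).

Lemma sdeg_inlE u : sdeg s (inl u) = \sum_v sign_weight (s u v).
Proof. exact: card_sign_diff. Qed.

Lemma sdeg_inrE v : sdeg s (inr v) = \sum_u sign_weight (s u v).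
Proof. exact: card_sign_diff. Qed.

End SignedDegreeSum.

Lemma sign_weight_odd n : sign_weight (Some (~~ odd n)) = (-1) ^+ n.
Proof. by rewrite -signr_odd; case: odd. Qed.

Lemma sign_weight_pos_muln (a : int) : sign_weight (Some (0 < a)) *+ `|a|%N = a.
Proof. by case: a => [[|n]|n] /=; rewrite ?mulr0n ?NegzE ?mulNrn ?natz. Qed.

Lemma sum_signr_double (R : pzRingType) n : \sum_(d < n.*2) (-1) ^+ d = 0 :> R.
Proof.
rewrite -(big_mkord xpredT (fun d => (-1) ^+ d)).
elim: n => [|n IHn]; first by rewrite big_nil.
by rewrite doubleS !big_nat_recr //= IHn add0r exprS mulN1r subrr.
Qed.

Lemma sumr_ord_lt (M : nmodType) (c : M) n N : (N <= n)%N ->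
  \sum_(d < n) (if (d < N)%N then c else 0) = c *+ N.
Proof.
move=> leNn.
by rewrite -big_mkcond -(big_ord_widen _ (fun=> c)) // sumr_const card_ord.
Qed.

Section Translation.
Variables (Z : finZmodType) (M : nmodType) (F : Z -> M).

Lemma sumr_shift x : \sum_y F (y - x) = \sum_y F y.
Proof. by rewrite (reindex_inj (addIr x)); apply: eq_bigr => y _; rewrite addrK. Qed.

Lemma sumr_reflect y : \sum_x F (y - x) = \sum_x F x.
Proof.
by rewrite (reindex_inj (inv_inj (subKr y))); apply: eq_bigr => x _; rewrite subKr.
Qed.

End Translation.

Lemma two_others (T : finType) (i : T) : (2 < #|T|)%N ->
  exists j l : T, [/\ j != i, l != i & l != j].
Proof.
move=> T_gt2.
have /card_gt0P [j] : (0 < #|[set~ i]|)%N by rewrite cardsC1; lia.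
rewrite !inE => jNi.
have /card_gt0P [l] : (0 < #|[set~ i] :\ j|)%N.
  by have := cardsD1 j [set~ i]; rewrite cardsC1 !inE jNi; lia.
by rewrite !inE => /andP [lNj lNi]; exists j, l.
Qed.

Section CirculantBlocks.
Variables (k m : nat) (a : 'I_k -> int).
Hypothesis a_le : forall i, (`|a i| <= m.*2.+2)%N.

Local Notation vertex := ('I_k * 'I_(m.*2.+2))%type.

Definition block_sign (i j : 'I_k) (d : 'I_(m.*2.+2)) : option bool :=
  if i == j then (if (d < `|a i|)%N then Some (0 < a i) else None)
  else Some (~~ odd d).

Definition circulant_signing : signing vertex vertex :=
  fun u v => block_sign u.1 v.1 (v.2 - u.2).

Lemma sum_block_sign i j :
  \sum_d sign_weight (block_sign i j d) = if i == j then a i else 0.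
Proof.
rewrite /block_sign; case: eqP => [_|_].
  under eq_bigr do rewrite (fun_if sign_weight).
  by rewrite sumr_ord_lt // sign_weight_pos_muln.
under eq_bigr do rewrite sign_weight_odd.
exact: (sum_signr_double _ m.+1).
Qed.

Lemma sdeg_circulant_inl u : sdeg circulant_signing (inl u) = a u.1.
Proof.
rewrite sdeg_inlE -(pair_bigA _ (fun j y => sign_weight (circulant_signing u (j, y)))).
under eq_bigr => j _ do
  rewrite (sumr_shift (fun d => sign_weight (block_sign u.1 j d))) sum_block_sign.
by rewrite -big_mkcond (big_pred1 u.1) // => j; rewrite /= eq_sym.
Qed.

Lemma sdeg_circulant_inr v : sdeg circulant_signing (inr v) = a v.1.
Proof.
rewrite sdeg_inrE -(pair_bigA _ (fun i x => sign_weight (circulant_signing (i, x) v))).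
under eq_bigr => i _ do
  rewrite (sumr_reflect (fun d => sign_weight (block_sign i v.1 d))) sum_block_sign.
by rewrite -big_mkcond (big_pred1 v.1).
Qed.

Lemma circulant_sdeg_set z :
  in_sdeg_set circulant_signing z <-> exists i, z = a i.
Proof.
split=> [[[u|v] <-]|[i ->]].
- by rewrite sdeg_circulant_inl; exists u.1.
- by rewrite sdeg_circulant_inr; exists v.1.
- by exists (inl (i, ord0)); rewrite sdeg_circulant_inl.
Qed.

Lemma circulant_adj (u v : vertex) :
  u.1 != v.1 -> sadj circulant_signing (inl u) (inr v).
Proof. by rewrite /= /circulant_signing /block_sign => /negbTE ->. Qed.

Lemma circulant_connected : (2 < k)%N -> sconnected circulant_signing.
Proof.
move=> k_gt2 [i x] [j y].
have [<-|ij] := eqVneq i j; last exact/connect1/(@circulant_adj (i, x) (j, y)).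
have := two_others i; rewrite card_ord => /(_ k_gt2) [j' [l [j'Ni lNi lNj']]].
have e1 : sadj circulant_signing (inl (i, x)) (inr (j', ord0)).
  by apply: circulant_adj; rewrite eq_sym.
have e2 : sadj circulant_signing (inr (j', ord0)) (inl (l, ord0)).
  exact: circulant_adj.
have e3 : sadj circulant_signing (inl (l, ord0)) (inr (i, y)).
  exact: circulant_adj.
exact: connect_trans (connect1 e1) (connect_trans (connect1 e2) (connect1 e3)).
Qed.

End CirculantBlocks.

Local Close Scope ring_scope.

Theorem theorem2p2 (S : seq int) : S != [::] ->
  exists (U V : finType) (s : signing U V),
    [/\ 0 < #|U|, 0 < #|V|, sconnected s &
        forall z : int, z \in S <-> in_sdeg_set s z].
Proof.
move=> S_neq0; set T := S ++ S ++ S.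
have memT z : (z \in T) = (z \in S) by rewrite !mem_cat !orbb.
have S_gt0 : (0 < size S)%N by rewrite lt0n size_eq0.
have T_gt2 : (2 < size T)%N by rewrite !size_cat; lia.
pose m := \max_(z <- S) `|z|%N.
have a_le i : (`|tnth (in_tuple T) i| <= m.*2.+2)%N.
  have Si : tnth (in_tuple T) i \in S by rewrite -memT mem_tnth.
  by have := leq_bigmax_seq (P := xpredT) (F := absz) _ Si isT; rewrite -/m; lia.
exists ('I_(size T) * 'I_(m.*2.+2))%type, ('I_(size T) * 'I_(m.*2.+2))%type.
exists (circulant_signing (tnth (in_tuple T))).
split; rewrite ?card_prod ?card_ord ?muln_gt0 ?(ltnW (ltnW T_gt2)) //.
- exact: circulant_connected.
- by move=> z; rewrite circulant_sdeg_set // -memT; split=> /(tnthP (in_tuple T)).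
Qed.
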